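(* For every integer $n\ge 1$, the sequence $(K_q(n,m))_{0\le m\le n}$ is strongly $q$-log-concave; that is, for all integers $1\le m\le l\le n-1$, the polynomial $K_q(n,m)K_q(n,l)-K_q(n,m-1)K_q(n,l+1)$ has nonnegative coefficients as a polynomial in $q$.
   Context: For integers $n\ge m\ge 0$ the Gaussian polynomial is ${n\brack m}=\prod_{i=0}^{m-1}\frac{1-q^{n-i}}{1-q^{m-i}}$. For $n\geq 1$ and $0\le m\le n$, the $q$-Kaplansky number is $K_q(n,m)=\frac{1-q^{n+m}}{1-q^{n}}{n\brack m}$ (a polynomial in $q$). A sequence of real polynomials $(f_k(q))$ is strongly $q$-log-concave if $f_a(q)f_b(q)-f_{a-1}(q)f_{b+1}(q)$ has nonnegative coefficients for all indices $b\ge a\ge 1$ (within the index range). *)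

From mathcomp Require Import all_boot all_order all_algebra.
Set Implicit Arguments. Unset Strict Implicit. Unset Printing Implicit Defensive.
Import Order.TTheory GRing.Theory Num.Theory.
Local Open Scope ring_scope.

(* The quotient is exact (the
   Gaussian polynomial is a polynomial), so we realise it as the
   Euclidean quotient in {poly rat}. *)
Definition gauss_poly (n m : nat) : {poly rat} :=
  (\prod_(i < m) (1 - 'X^(n - i))) %/ (\prod_(i < m) (1 - 'X^(m - i))).

(* q-Kaplansky number K_q(n,m) = (1 - q^(n+m)) / (1 - q^n) * [n brack m];
   again an exact quotient for n >= 1. *)
Definition qKaplansky (n m : nat) : {poly rat} :=
  ((1 - 'X^(n + m)) * gauss_poly n m) %/ (1 - 'X^n).

(* Write [qbin r s] for the Gaussian binomial [r + s brack r], so that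
   K_q(n, m) = qbin m (n - m) + q^n qbin (m - 1) (n - m).  Expanding the
   products, K(n,m) K(n,l) - K(n,m-1) K(n,l+1) is a nonnegative combination of
   cross differences
     qbin (k + 1) s * qbin l (t + 1) - q^j * qbin k (s + 1) * qbin (l + 1) t
   with k <= l, t <= s and j <= (l - k) + (s - t) (plus products of Gaussian
   binomials when m = 1).  These have nonnegative coefficients, by induction on
   k + s + l + t: the symmetry qbin r s = qbin s r exchanges (k, l) with (t, s),
   so we may assume k < l, and then one q-Pascal step on the second factors
   (the rule with q^(l+1) when j = 0, the rule with q^(t+1) when j > 0) writes
   the cross difference as a nonnegative combination of smaller ones. *)

From mathcomp Require Import all_boot all_order all_algebra.
From mathcomp Require Import ring zify.
Import Order.TTheory GRing.Theory Num.Theory.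
Local Open Scope ring_scope.

Set Implicit Arguments.
Unset Strict Implicit.
Unset Printing Implicit Defensive.

Section GaussianBinomials.
Context {R : idomainType}.

Fixpoint qbin (r s : nat) {struct r} : {poly R} :=
  match r with
  | 0 => 1
  | r'.+1 =>
      let fix qbin_r (s : nat) : {poly R} :=
        match s with 0 => 1 | s'.+1 => qbin r' s + 'X^r * qbin_r s' end
      in qbin_r s
  end.

Lemma qbin0l s : qbin 0 s = 1. Proof. by []. Qed.
Lemma qbin0r r : qbin r 0 = 1. Proof. by case: r. Qed.
Lemma qbinSl r s : qbin r.+1 s.+1 = qbin r s.+1 + 'X^(r.+1) * qbin r.+1 s.
Proof. by []. Qed.

Definition qfact n : {poly R} := \prod_(i < n) (1 - 'X^(i.+1)).

Lemma qfact0 : qfact 0 = 1. Proof. exact: big_ord0. Qed.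
Lemma qfactS n : qfact n.+1 = qfact n * (1 - 'X^(n.+1)).
Proof. by rewrite /qfact big_ord_recr. Qed.

Lemma onemXn_neq0 n : (0 < n)%N -> 1 - 'X^n != 0 :> {poly R}.
Proof. by move=> n_gt0; rewrite -opprB oppr_eq0 monic_neq0 // monicXnsubC. Qed.

Lemma qfact_neq0 n : qfact n != 0.
Proof. by apply/prodf_neq0 => i _; rewrite onemXn_neq0. Qed.

Lemma qbin_qfact r s : qbin r s * (qfact r * qfact s) = qfact (r + s).
Proof.
elim: r s => [|r IHr] s; first by rewrite qbin0l qfact0 !mul1r.
elim: s => [|s IHs]; first by rewrite qbin0r qfact0 mul1r mulr1 addn0.
have Ea : qbin r s.+1 * (qfact r * (qfact s * (1 - 'X^(s.+1)))) = qfact (r + s).+1.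
  by rewrite -qfactS IHr addnS.
have Eb : qbin r.+1 s * (qfact r * (1 - 'X^(r.+1)) * qfact s) = qfact (r + s).+1.
  by rewrite -qfactS IHs addSn.
have XrXs : 'X^((r + s).+2) = 'X^(r.+1) * 'X^(s.+1) :> {poly R}.
  by rewrite -exprD addSn addnS.
rewrite qbinSl addSn addnS [qfact r.+1]qfactS [qfact s.+1]qfactS [qfact _.+2]qfactS XrXs.
transitivity ((1 - 'X^(r.+1)) * (qbin r s.+1 * (qfact r * (qfact s * (1 - 'X^(s.+1)))))
  + 'X^(r.+1) * (1 - 'X^(s.+1)) * (qbin r.+1 s * (qfact r * (1 - 'X^(r.+1)) * qfact s))).
  by ring.
by rewrite Ea Eb; ring.
Qed.

Lemma qbinC r s : qbin r s = qbin s r.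
Proof.
apply: (mulIf (mulf_neq0 (qfact_neq0 r) (qfact_neq0 s))).
by rewrite qbin_qfact [qfact r * _]mulrC qbin_qfact addnC.
Qed.

Lemma qbinSr r s : qbin r.+1 s.+1 = qbin r.+1 s + 'X^(s.+1) * qbin r s.+1.
Proof. by rewrite qbinC qbinSl [qbin s _]qbinC [qbin s.+1 _]qbinC. Qed.

Lemma qbin_absorb m s : (1 - 'X^(m.+1)) * qbin m.+1 s = (1 - 'X^((m + s).+1)) * qbin m s.
Proof.
apply: (mulIf (mulf_neq0 (qfact_neq0 m) (qfact_neq0 s))).
have := qbin_qfact m.+1 s; rewrite qfactS addSn qfactS -(qbin_qfact m s) => E.
transitivity (qbin m.+1 s * (qfact m * (1 - 'X^(m.+1)) * qfact s)); first by ring.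
by rewrite E; ring.
Qed.

Lemma qfact_falling n m :
  (m <= n)%N -> \prod_(i < m) (1 - 'X^(n - i)) * qfact (n - m) = qfact n.
Proof.
elim: m => [|m IHm] le_mn; first by rewrite big_ord0 mul1r subn0.
rewrite big_ord_recr /= -mulrA -IHm 1?ltnW //; congr (_ * _).
have -> : (n - m = (n - m.+1).+1)%N by lia.
by rewrite qfactS mulrC.
Qed.

Definition qbin_cross_diff (k s l t j : nat) : {poly R} :=
  qbin k.+1 s * qbin l t.+1 - 'X^j * qbin k s.+1 * qbin l.+1 t.

Lemma qbin_cross_diffC k s l t j :
  qbin_cross_diff k s l t j = qbin_cross_diff t l s k j.
Proof.
rewrite /qbin_cross_diff [qbin t.+1 l]qbinC [qbin s k.+1]qbinC.
by rewrite [qbin t l.+1]qbinC [qbin s.+1 k]qbinC; ring.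
Qed.

Lemma qbin_cross_diffSl k s l t j :
  qbin_cross_diff k s l.+1 t.+1 j =
  qbin_cross_diff k s l t.+1 j + 'X^(l.+1) * qbin_cross_diff k s l.+1 t j.+1.
Proof. by rewrite /qbin_cross_diff (qbinSl l t.+1) (qbinSl l.+1 t) !exprS; ring. Qed.

Lemma qbin_cross_diffSl0 k s l j :
  qbin_cross_diff k s l.+1 0 j = qbin_cross_diff k s l 0 j + 'X^(l.+1) * qbin k.+1 s.
Proof. by rewrite /qbin_cross_diff (qbinSl l 0) !qbin0r; ring. Qed.

Lemma qbin_cross_diffSr k s l t j :
  qbin_cross_diff k s l.+1 t.+1 j.+1 =
  qbin_cross_diff k s l.+1 t j.+1 + 'X^(t.+2) * qbin_cross_diff k s l t.+1 j.
Proof. by rewrite /qbin_cross_diff (qbinSr l t.+1) (qbinSr l.+1 t) !exprS; ring. Qed.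

Lemma qbin_cross_diffSr0 k s l j :
  qbin_cross_diff k s l.+1 0 j.+1 = qbin k.+1 s + 'X * qbin_cross_diff k s l 0 j.
Proof. by rewrite /qbin_cross_diff (qbinSr l 0) !qbin0r expr1 exprS; ring. Qed.

End GaussianBinomials.

Notation nneg_poly := (polyOver Num.Def.nneg_num_pred).

Section Positivity.
Context {R : numDomainType}.

Lemma nneg_polyP (p : {poly R}) : p \is a nneg_poly -> forall i, 0 <= p`_i.
Proof. by move/polyOverP. Qed.

Lemma nneg_poly_addXnM e (p q : {poly R}) :
  p \is a nneg_poly -> q \is a nneg_poly -> p + 'X^e * q \is a nneg_poly.
Proof. by move=> p_nneg q_nneg; rewrite rpredD // rpredM // polyOverXn. Qed.

Lemma qbin_nneg (r s : nat) : @qbin R r s \is a nneg_poly.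
Proof.
elim: r s => [|r IHr] s; first by rewrite qbin0l rpred1.
elim: s => [|s IHs]; first by rewrite qbin0r rpred1.
by rewrite qbinSl nneg_poly_addXnM ?IHr ?IHs.
Qed.

Section CrossDiffStep.
Variable N : nat.
Hypothesis IHN : forall k s l t j, (k + s + l + t < N)%N ->
  (k <= l)%N -> (t <= s)%N -> (j <= l - k + (s - t))%N ->
  @qbin_cross_diff R k s l t j \is a nneg_poly.

Lemma qbin_cross_diff_nneg_lt k s l t j : (k + s + l + t <= N)%N ->
  (k < l)%N -> (t <= s)%N -> (j <= l - k + (s - t))%N ->
  @qbin_cross_diff R k s l t j \is a nneg_poly.
Proof.
case: l => // l le_N lt_kl le_ts le_j.
case: t le_N le_ts le_j => [|t] le_N le_ts le_j; case: j le_j => [|j] le_j.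
- by rewrite qbin_cross_diffSl0 nneg_poly_addXnM ?qbin_nneg // IHN //; lia.
- by rewrite qbin_cross_diffSr0 rpredD ?qbin_nneg // rpredM ?polyOverX // IHN //; lia.
- by rewrite qbin_cross_diffSl nneg_poly_addXnM // IHN //; lia.
- by rewrite qbin_cross_diffSr nneg_poly_addXnM // IHN //; lia.
Qed.

End CrossDiffStep.

Lemma qbin_cross_diff_nneg k s l t j :
  (k <= l)%N -> (t <= s)%N -> (j <= l - k + (s - t))%N ->
  @qbin_cross_diff R k s l t j \is a nneg_poly.
Proof.
have [N] := ubnP (k + s + l + t); elim: N k s l t j => // N IHN k s l t j.
rewrite ltnS => le_N le_kl le_ts le_j.
have [lt_kl|le_lk] := ltnP k l; first exact: (qbin_cross_diff_nneg_lt IHN).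
have {le_kl le_lk} eq_lk : l = k by lia.
subst l.
have [lt_ts|le_st] := ltnP t s.
  by rewrite qbin_cross_diffC (qbin_cross_diff_nneg_lt IHN) //; lia.
have -> : t = s by lia.
have -> : j = 0%N by lia.
by rewrite /qbin_cross_diff expr0 mul1r [X in _ - X]mulrC subrr rpred0.
Qed.

End Positivity.

Lemma gauss_polyE n m : (m <= n)%N -> gauss_poly n m = qbin m (n - m).
Proof.
move=> le_mn.
have num : \prod_(i < m) (1 - 'X^(n - i)) = qbin m (n - m) * qfact m :> {poly rat}.
  apply: (mulIf (qfact_neq0 (n - m))).
  by rewrite qfact_falling // -mulrA qbin_qfact subnKC.
have den : \prod_(i < m) (1 - 'X^(m - i)) = qfact m :> {poly rat}.
  by rewrite -[RHS](qfact_falling (leqnn m)) subnn qfact0 mulr1.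
by rewrite /gauss_poly num den mulpK // qfact_neq0.
Qed.

Lemma qKaplansky0 n : (0 < n)%N -> qKaplansky n 0 = 1.
Proof.
move=> n_gt0.
by rewrite /qKaplansky gauss_polyE // qbin0l mulr1 addn0 divpp // onemXn_neq0.
Qed.

Lemma qKaplanskyS n m : (m < n)%N ->
  qKaplansky n m.+1 = qbin m.+1 (n - m.+1) + 'X^n * qbin m (n - m.+1).
Proof.
move=> lt_mn; rewrite /qKaplansky gauss_polyE //.
have := qbin_absorb m (n - m.+1); rewrite (_ : (m + (n - m.+1)).+1 = n); last by lia.
set b1 := qbin m.+1 _; set b0 := qbin m _ => absorb.
suff -> : (1 - 'X^(n + m.+1)) * b1 = (1 - 'X^n) * (b1 + 'X^n * b0).
  by rewrite mulKp // onemXn_neq0 //; lia.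
apply/subr0_eq; rewrite exprD.
transitivity ('X^n * ((1 - 'X^(m.+1)) * b1 - (1 - 'X^n) * b0)); first by ring.
by rewrite absorb subrr mulr0.
Qed.

Theorem corollary1p3 (n m l : nat) :
  (1 <= n)%N -> (1 <= m)%N -> (m <= l)%N -> (l <= n - 1)%N ->
  forall i : nat,
    0 <= (qKaplansky n m * qKaplansky n l
          - qKaplansky n (m - 1) * qKaplansky n (l + 1))`_i.
Proof.
case: m => // m n_gt0 _; case: l => // l le_ml le_ln.
apply: nneg_polyP; rewrite subn1 addn1 /= !qKaplanskyS; try lia.
have -> : (n - l.+1 = (n - l.+2).+1)%N by lia.
set t := (n - l.+2)%N; set s := (n - m.+1)%N.
have le_ts : (t <= s)%N by lia.
case: m le_ml @s le_ts => [|m] le_ml s le_ts.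
- rewrite qKaplansky0 // (_ : _ - _ = qbin_cross_diff 0 s l.+1 t 0 + 'X^n *
      (qbin_cross_diff 0 s l t 0 + (qbin l.+1 t.+1 + 'X^n * qbin l t.+1))).
    by do ![apply: qbin_nneg | apply: polyOverXn | apply: qbin_cross_diff_nneg; lia
             | apply: rpredD | apply: rpredM].
  by rewrite /qbin_cross_diff !qbin0l; ring.
- rewrite qKaplanskyS; last by lia.
  have -> : (n - m.+1 = s.+1)%N by lia.
  rewrite (_ : _ - _ = qbin_cross_diff m.+1 s l.+1 t 0 + 'X^n *
      (qbin_cross_diff m.+1 s l t 0 +
       (qbin_cross_diff m s l.+1 t 0 + 'X^n * qbin_cross_diff m s l t 0))).
    by do ![apply: qbin_cross_diff_nneg; lia | apply: polyOverXn
             | apply: rpredD | apply: rpredM].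
  by rewrite /qbin_cross_diff; ring.
Qed.
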